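(* For each $\ell\geq 3$ there are infinitely many $4$-critical graphs of odd-girth $>\ell$, forming a family of quadratic edge density; in particular $c_{\ell,4}\geq \frac{1}{(\ell+1)^2}$.
   Context: A graph is $k$-critical if it has chromatic number $k$ and removing any edge allows it to be properly $(k-1)$-colored. The odd-girth of a graph is the length of a shortest odd cycle. For integers $\ell\geq 3$, $k\geq 4$, the density constant $c_{\ell,k}$ is the supremum of the constants $c$ such that there are infinitely many $k$-critical graphs of odd-girth $>\ell$, each having more than $cn^2$ edges, where $n$ is its number of vertices. *)

From HB Require Import structures.
From mathcomp Require Import all_boot all_order all_algebra.
From mathcomp Require Import boolp classical_sets reals.
Set Implicit Arguments. Unset Strict Implicit. Unset Printing Implicit Defensive.
Import Order.TTheory GRing.Theory Num.Theory.
Local Open Scope ring_scope.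

Definition simple_graph (n : nat) (e : rel 'I_n) : Prop :=
  irreflexive e /\ symmetric e.

Definition num_edges (n : nat) (e : rel 'I_n) : nat :=
  #|[set p : 'I_n * 'I_n | (p.1 < p.2)%N && e p.1 p.2]|.

Definition colorable (n : nat) (e : rel 'I_n) (c : nat) : Prop :=
  exists f : 'I_n -> 'I_c, forall x y, e x y -> f x != f y.

Definition chromatic_number_eq (n : nat) (e : rel 'I_n) (k : nat) : Prop :=
  colorable e k /\ forall c, (c < k)%N -> ~ colorable e c.

Definition remove_edge (n : nat) (e : rel 'I_n) (u v : 'I_n) : rel 'I_n :=
  fun x y => e x y && ~~ (((x == u) && (y == v)) || ((x == v) && (y == u))).

Definition critical (n : nat) (e : rel 'I_n) (k : nat) : Prop :=
  chromatic_number_eq e k /\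
  forall u v, e u v -> colorable (remove_edge e u v) k.-1.

Definition has_cycle_of_length (n : nat) (e : rel 'I_n) (m : nat) : Prop :=
  (3 <= m)%N /\
  exists f : nat -> 'I_n,
    (forall i j, (i < m)%N -> (j < m)%N -> f i = f j -> i = j) /\
    (forall i, (i < m)%N -> e (f i) (f ((i.+1) %% m)%N)).

Definition odd_girth_gt (n : nat) (e : rel 'I_n) (l : nat) : Prop :=
  forall m, odd m -> (m <= l)%N -> ~ has_cycle_of_length e m.

(* "There are infinitely many k-critical graphs of odd-girth > l each having
   more than c n^2 edges": since there are only finitely many graphs (up to
   isomorphism) on a bounded number of vertices, this means that such graphs
   exist with arbitrarily many vertices. *)
Definition dense_family (R : realType) (l k : nat) (c : R) : Prop :=
  forall N : nat, exists (n : nat) (e : rel 'I_n),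
    [/\ (N <= n)%N, simple_graph e, critical e k, odd_girth_gt e l &
        c * (n%:R ^+ 2) < (num_edges e)%:R].

Definition density_constant (R : realType) (l k : nat) : R :=
  sup [set c : R | dense_family l k c].

(* Take two copies of the generalized Mycielskian of an odd cycle C_m with
   layers 0..r but without its apex, give every vertex of layer r a pendant
   copy in a top layer, and join the two top layers completely.  In a
   3-colouring one of the top layers uses a single colour, which avoids all
   of layer r below it and so plays the role of the apex.  Reading colours
   along closed walks as a winding around the triangle, the zigzag walks
   between consecutive layers all have the same winding, which is twice the
   (odd) winding of the base cycle at the bottom and 0 next to the apex: a
   contradiction.  An odd cycle either passes from one copy to the other and
   back through a base cycle, which takes 2r+5 steps, or stays inside one
   copy where it must go around C_m.  Deleting one of the m^2 edges between
   the top layers leaves a 3-colourable graph, so every 4-critical subgraph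
   keeps all of them, while there are only 2(r+2)m <= (l+1)m vertices. *)

From HB Require Import structures.
From mathcomp Require Import all_boot all_order all_algebra.
From mathcomp Require Import boolp classical_sets reals.
From mathcomp Require Import zify ring lra.
Import Order.TTheory GRing.Theory Num.Theory.

Set Implicit Arguments.
Unset Strict Implicit.
Unset Printing Implicit Defensive.

(** * Colourings and edge-minimal subgraphs *)

Section GraphFacts.
Variables (n : nat).
Implicit Types (e : rel 'I_n) (u v : 'I_n).

Lemma colorable_subrel e1 e2 c :
  subrel e1 e2 -> colorable e2 c -> colorable e1 c.
Proof. by move=> sub [f hf]; exists f => x y /sub /hf. Qed.

Lemma colorable_widen e c c' : c <= c' -> colorable e c -> colorable e c'.
Proof.
move=> le_cc' [f hf]; exists (fun x => widen_ord le_cc' (f x)) => x y /hf.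
by apply: contra => /eqP[] /val_inj ->.
Qed.

Lemma odd_girth_gt_subrel e1 e2 l : subrel e1 e2 -> odd_girth_gt e2 l -> odd_girth_gt e1 l.
Proof.
move=> sub girth L oddL leLl [L3 [f [f_inj f_adj]]].
by apply: (girth L oddL leLl); split=> //; exists f; split=> // i /f_adj /sub.
Qed.

Lemma simple_remove_edge e u v : simple_graph e -> simple_graph (remove_edge e u v).
Proof.
case=> irr sym; split=> [x|x y]; rewrite /remove_edge ?irr // sym.
by rewrite [(y == u) && _]andbC [(y == v) && _]andbC orbC.
Qed.

Lemma num_edges_le_square e : num_edges e <= n * n.
Proof. by rewrite /num_edges (leq_trans (max_card _)) // card_prod card_ord. Qed.

Lemma num_edges_remove_edge e u v :
  simple_graph e -> e u v -> num_edges (remove_edge e u v) < num_edges e.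
Proof.
case=> irr sym euv; rewrite /num_edges; apply/proper_card/properP; split.
  by apply/fintype.subsetP => p; rewrite !inE => /andP[-> /andP[-> _]].
have [lt_uv|lt_vu|eq_uv] := ltngtP u v; last first.
- by move: euv; rewrite (val_inj eq_uv) irr.
- exists (v, u); first by rewrite inE /= lt_vu sym euv.
  by rewrite !inE /remove_edge !eqxx /= orbT !andbF.
- exists (u, v); first by rewrite inE /= lt_uv euv.
  by rewrite !inE /remove_edge !eqxx /= !andbF.
Qed.

Lemma edge_minimal_subgraph e c : simple_graph e -> ~ colorable e c ->
  exists e' : rel 'I_n, [/\ simple_graph e', subrel e' e, ~ colorable e' c &
     forall u v, e' u v -> colorable (remove_edge e' u v) c].
Proof.
move: {2}(num_edges e) (leqnn (num_edges e)) => k.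
elim: k e => [|k IH] e le_ek simple_e uncol_e.
  exists e; split=> // u v euv.
  have := num_edges_remove_edge simple_e euv.
  by rewrite leqn0 in le_ek; rewrite (eqP le_ek).
have [minimal|] := pselect (forall u v, e u v -> colorable (remove_edge e u v) c).
  by exists e; split.
move=> /existsNP [u /existsNP [v /not_implyP [euv uncol_uv]]].
have le_uv_k : num_edges (remove_edge e u v) <= k.
  by rewrite -ltnS (leq_trans (num_edges_remove_edge simple_e euv)).
have [e' [? sub ? ?]] := IH _ le_uv_k (simple_remove_edge u v simple_e) uncol_uv.
exists e'; split=> //; move=> x y /sub; rewrite /remove_edge => /andP[] //.
Qed.

Lemma critical_of_edge_minimal e c : simple_graph e -> ~ colorable e c.+1 ->
  (forall u v, e u v -> colorable (remove_edge e u v) c.+1) -> critical e c.+2.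
Proof.
move=> [irr _] uncol minimal; split; last by [].
split; last first.
  by move=> c' lt_c' col; apply/uncol/(colorable_widen _ col); rewrite -ltnS.
have [u [v euv]] : exists u v, e u v.
  apply: contrapT => no_edge; apply: uncol; exists (fun _ => ord0) => x y exy.
  by case: no_edge; exists x, y.
have [g hg] := minimal u v euv.
pose f x := if x == u then ord_max else widen_ord (leqnSn c.+1) (g x).
have g_lt_max z : widen_ord (leqnSn c.+1) (g z) != ord_max.
  by rewrite -val_eqE /= neq_ltn ltn_ord.
exists f => x y exy; rewrite /f.
have [xu|xu] := eqVneq x u; have [yu|yu] := eqVneq y u.
- by move: exy; rewrite xu yu irr.
- by rewrite eq_sym g_lt_max.
- by rewrite g_lt_max.
have : remove_edge e u v x y by rewrite /remove_edge exy (negPf xu) (negPf yu) andbF.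
by move=> /hg; apply: contra => /eqP[] /val_inj ->.
Qed.

End GraphFacts.

(** * Winding of 3-colourings around the triangle *)

Local Open Scope ring_scope.

Definition turn (a b : 'I_3) : int := if b == inZp a.+1 then 1 else -1.

Lemma turn_pm1 (a b : 'I_3) : turn a b = 1 \/ turn a b = -1.
Proof. by rewrite /turn; case: ifP; [left|right]. Qed.

Lemma turn_square (a b c d : 'I_3) : a != b -> b != c -> c != d -> d != a ->
  turn a b + turn b c = turn a d + turn d c.
Proof.
by case: a => [[|[|[|?]]] ?] //; case: b => [[|[|[|?]]] ?] //;
   case: c => [[|[|[|?]]] ?] //; case: d => [[|[|[|?]]] ?].
Qed.

Lemma turn_apex (o a y b : 'I_3) : a != o -> b != o -> a != y -> y != b ->
  turn a y + turn y b = turn o b - turn o a.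
Proof.
by case: o => [[|[|[|?]]] ?] //; case: a => [[|[|[|?]]] ?] //;
   case: y => [[|[|[|?]]] ?] //; case: b => [[|[|[|?]]] ?].
Qed.

Lemma sum_pm1 (n : nat) (h : nat -> int) : (forall i, h i = 1 \/ h i = -1) ->
  exists t : int, \sum_(0 <= i < n) h i = 2 * t + n%:Z.
Proof.
move=> hpm; elim: n => [|n [t IH]]; first by exists 0; rewrite big_nil.
rewrite big_nat_recr //= IH; case: (hpm n) => ->; first by exists t; lia.
by exists (t - 1); lia.
Qed.

Lemma sum_periodic_shift (m : nat) (h : nat -> int) : (forall i, h (i + m)%N = h i) ->
  \sum_(0 <= i < m) h i.+1 = \sum_(0 <= i < m) h i.
Proof.
case: m => [|m] hper; first by rewrite !big_nil.
have e1 := big_nat_recl m 0 (fun i => h i) (leq0n m).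
have e2 := big_nat_recr m 0 (fun i => h i) (leq0n m).
rewrite big_nat_recr //= -(hper 0%N) add0n addrC /= in e1 e2 *.
by rewrite -e1 e2.
Qed.

Definition winding m (w : nat -> 'I_3) := \sum_(0 <= i < m) turn (w i) (w i.+1).

(* Winding of the closed walk that zigzags between two layers y and z of
   period m, moving one position forward at each step. *)
Definition zigzag m (y z : nat -> 'I_3) :=
  \sum_(0 <= i < m) (turn (y i) (z i.+1) + turn (z i.+1) (y i.+2)).

Section Zigzag.
Variables (m : nat) (y z : nat -> 'I_3).
Hypotheses (y_per : forall i, y (i + m)%N = y i) (z_per : forall i, z (i + m)%N = z i).

Lemma zigzag_swap : zigzag m y z = zigzag m z y.
Proof.
rewrite /zigzag !big_split /= addrC; congr (_ + _).
  apply: (@sum_periodic_shift m (fun i => turn (z i) (y i.+1))) => i.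
  by rewrite -!addSn !z_per y_per.
symmetry; apply: (@sum_periodic_shift m (fun i => turn (y i) (z i.+1))) => i.
by rewrite -!addSn y_per z_per.
Qed.

Lemma zigzag_self : zigzag m y y = winding m y + winding m y.
Proof.
rewrite /zigzag big_split /=; congr (_ + _).
apply: (@sum_periodic_shift m (fun i => turn (y i) (y i.+1))) => i.
by rewrite -!addSn !y_per.
Qed.

Lemma zigzag_square (z' : nat -> 'I_3) :
  (forall i, [&& y i != z' i.+1, z' i.+1 != y i.+2, y i.+2 != z i.+1 & z i.+1 != y i]) ->
  zigzag m y z' = zigzag m y z.
Proof.
move=> hsq; apply: eq_bigr => i _.
by case/and4P: (hsq i) => *; apply: turn_square.
Qed.

Lemma zigzag_apex (o : 'I_3) : (forall i, y i != o) ->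
  (forall i, y i != z i.+1 /\ z i.+1 != y i.+2) -> zigzag m y z = 0.
Proof.
move=> yo hyz; rewrite /zigzag.
rewrite (eq_bigr (fun i => turn o (y i.+2) - turn o (y i))); last first.
  by move=> i _; case: (hyz i) => *; apply: turn_apex.
rewrite sumrB (@sum_periodic_shift m (fun i => turn o (y i.+1))); last first.
  by move=> i; rewrite -addSn y_per.
have o_per i : turn o (y (i + m)%N) = turn o (y i) by rewrite y_per.
by rewrite (sum_periodic_shift o_per) subrr.
Qed.

End Zigzag.

Lemma gen_mycielski_not_3colorable (m r : nat) (x : nat -> nat -> 'I_3) (o : 'I_3) :
  odd m -> (forall k i, x k (i + m)%N = x k i) ->
  (forall i, x 0%N i != x 0%N i.+1) ->
  (forall k i, (k < r)%N -> x k i != x k.+1 i.+1 /\ x k.+1 i != x k i.+1) ->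
  (forall i, x r i != o) -> False.
Proof.
move=> odd_m x_per base_proper layer_proper top_avoids_o.
(* Pairing layer k with layer k.-1 pairs the base cycle with itself. *)
have diag k i : (k <= r)%N -> x k.-1 i != x k i.+1 /\ x k i != x k.-1 i.+1.
  by case: k => [|k] hk; [rewrite base_proper | apply: layer_proper].
have zz k : (k <= r)%N ->
    zigzag m (x k) (x k.-1) = winding m (x 0%N) + winding m (x 0%N).
  elim: k => [|k IH] hk; first exact: zigzag_self.
  rewrite zigzag_swap // -IH ?(ltnW hk) //; apply: zigzag_square => i.
  have [d1 _] := diag k i.+1 (ltnW hk); have [_ d2] := diag k i (ltnW hk).
  by rewrite (layer_proper k i hk).1 (layer_proper k i.+1 hk).2 eq_sym d1 eq_sym d2.
have := zz r (leqnn r).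
rewrite (@zigzag_apex m _ _ (x_per r) o top_avoids_o); last first.
  by move=> i; rewrite (diag r i (leqnn r)).2 (diag r i.+1 (leqnn r)).1.
rewrite /winding.
have [t ->] := @sum_pm1 m _ (fun i => turn_pm1 (x 0%N i) (x 0%N i.+1)).
by move: odd_m; clear; lia.
Qed.

Local Close Scope ring_scope.

(** * The twin Mycielski graph *)

Definition cyc_adj (m p p' : nat) := (p' == p.+1 %% m) || (p == p'.+1 %% m).

Lemma cyc_adjC m p p' : cyc_adj m p p' = cyc_adj m p' p.
Proof. by rewrite /cyc_adj orbC. Qed.

Lemma cyc_adj_irr m p : 2 <= m -> p < m -> cyc_adj m p p = false.
Proof.
move=> m2 ltpm; rewrite /cyc_adj orbb; apply/negbTE.
have [eqSm|ltSm] : p.+1 = m \/ p.+1 < m by lia.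
  by rewrite eqSm modnn; lia.
by rewrite modn_small //; lia.
Qed.

Lemma modn_succ_mod p m : (p %% m).+1 %% m = p.+1 %% m.
Proof. by rewrite -addn1 modnDml addn1. Qed.

Lemma cyc_adj_succ m p : cyc_adj m (p %% m) (p.+1 %% m).
Proof. by rewrite /cyc_adj modn_succ_mod eqxx. Qed.

Lemma cyc_adj_shift m p p' d :
  cyc_adj m p p' -> cyc_adj m ((p + d) %% m) ((p' + d) %% m).
Proof.
by rewrite /cyc_adj => /orP[] /eqP ->; apply/orP; [left|right];
  rewrite modn_succ_mod modnDml addSn.
Qed.

(* Lift the walk to Z: the displacement z of a closed walk of length L is a
   multiple of m with |z| <= L and z = L (mod 2); if L < m then z = 0 and L
   is even. *)
Lemma cyc_adj_closed_walk_long m L (p : nat -> nat) :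
  (forall j, cyc_adj m (p j) (p j.+1)) -> p L = p 0 -> odd L -> m <= L.
Proof.
move=> adj_p closed odd_L; rewrite leqNgt; apply/negP => lt_Lm.
have lift J : exists z w t : int, [/\ (- (J%:Z) <= z <= J%:Z)%R,
    (z + J%:Z = 2 * w)%R & ((p 0)%:Z + z - (p J)%:Z = t * m%:Z)%R].
  elim: J => [|J [z [w [t [z_le z_par z_mod]]]]].
    by exists 0%R, 0%R, 0%R; split; [lia|lia|rewrite addr0 subrr mul0r].
  have dq := divn_eq (p J).+1 m; have dq' := divn_eq (p J.+1).+1 m.
  case/orP: (adj_p J) => /eqP E.
    rewrite -E in dq.
    by exists (z + 1)%R, (w + 1)%R, (t + ((p J).+1 %/ m)%:Z)%R; split; lia.
  rewrite -E in dq'.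
  by exists (z - 1)%R, w, (t - ((p J.+1).+1 %/ m)%:Z)%R; split; lia.
have [z [w [t [z_le z_par]]]] := lift L; rewrite closed addrAC subrr add0r.
have [->|[t_pos|t_neg]] : (t = 0 \/ 1 <= t \/ t <= -1)%R by lia.
- by rewrite mul0r; lia.
- by nia.
- by nia.
Qed.

Section TwinMycielski.
Variables r m : nat.

(* Vertex (s, k, p), with side s < 2, layer k <= r.+1 and position p < m, is
   coded by the number (s * r.+2 + k) * m + p. *)
Definition code (s k p : nat) := (s * r.+2 + k) * m + p.
Definition twin_size := (r.+2 * m) * 2.
Definition side v := v %/ m %/ r.+2.
Definition layer v := v %/ m %% r.+2.
Definition pos v := v %% m.

Lemma pos_code s k p : p < m -> pos (code s k p) = p.
Proof. by move=> lt_pm; rewrite /pos /code modnMDl modn_small. Qed.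

Lemma code_divm s k p : p < m -> code s k p %/ m = s * r.+2 + k.
Proof.
by move=> lt_pm; rewrite /code divnMDl ?divn_small ?addn0 //; case: m lt_pm.
Qed.

Lemma layer_code s k p : p < m -> k < r.+2 -> layer (code s k p) = k.
Proof. by move=> lt_pm lt_kr; rewrite /layer code_divm // modnMDl modn_small. Qed.

Lemma side_code s k p : p < m -> k < r.+2 -> side (code s k p) = s.
Proof.
by move=> lt_pm lt_kr; rewrite /side code_divm // divnMDl // divn_small ?addn0.
Qed.

Lemma code_lt s k p : s < 2 -> k < r.+2 -> p < m -> code s k p < twin_size.
Proof. by rewrite /code /twin_size => *; nia. Qed.

Lemma codeK v : 0 < m -> code (side v) (layer v) (pos v) = v.
Proof. by move=> m_gt0; rewrite /code /side /layer /pos -divn_eq -divn_eq. Qed.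

Lemma coords_inj v w : 0 < m ->
  side v = side w -> layer v = layer w -> pos v = pos w -> v = w.
Proof.
by move=> m_gt0 sv lv pv; rewrite -(codeK v m_gt0) -(codeK w m_gt0) sv lv pv.
Qed.

Lemma side_lt v : v < twin_size -> side v < 2.
Proof.
by rewrite /side /twin_size => lt_v; rewrite divnAC -divnMA ltn_divLR; nia.
Qed.

Lemma layer_lt v : layer v < r.+2.
Proof. by rewrite /layer ltn_mod. Qed.

Lemma pos_lt v : 0 < m -> pos v < m.
Proof. by move=> m_gt0; rewrite /pos ltn_mod. Qed.

(* On each side, layers 0..r form the generalized Mycielskian of the cycle
   C_m without its apex, and vertex p of the top layer r.+1 is a pendant of
   vertex p of layer r; the two top layers are completely joined. *)
Definition twin_adj (x y : nat) : bool :=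
  let s := side x in let k := layer x in let p := pos x in
  let s' := side y in let k' := layer y in let p' := pos y in
  [|| [&& s == s', k == 0, k' == 0 & cyc_adj m p p'],
      [&& s == s', k' == k.+1, k' <= r & cyc_adj m p p'],
      [&& s == s', k == k'.+1, k <= r & cyc_adj m p p'],
      [&& s == s', k == r, k' == r.+1 & p == p'],
      [&& s == s', k' == r, k == r.+1 & p == p'] |
      [&& s != s', k == r.+1 & k' == r.+1]].

Definition twin_mycielski : rel 'I_twin_size := fun x y => twin_adj x y.

Lemma twin_adjC x y : twin_adj x y = twin_adj y x.
Proof.
rewrite /twin_adj /= cyc_adjC [side y == _]eq_sym [pos y == _]eq_sym.
by move: (cyc_adj _ _ _) (side x == _) (pos x == _); lia.
Qed.

Lemma twin_mycielski_simple : 2 <= m -> simple_graph twin_mycielski.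
Proof.
move=> m2; split=> [x|x y]; last by rewrite /twin_mycielski twin_adjC.
rewrite /twin_mycielski /twin_adj /= cyc_adj_irr //; last by apply: pos_lt; lia.
by move: (side x) (layer x) => s k; lia.
Qed.

(* The height runs from the base cycle of side 0 (height 0) through the two
   top layers (heights r.+1, r.+2) to the base cycle of side 1. *)
Definition height v := if side v == 0 then layer v else (2 * r + 3) - layer v.

Lemma twin_adj_height x y : x < twin_size -> y < twin_size -> twin_adj x y ->
  [&& layer x == 0, layer y == 0 & side x == side y]
  || (height y == (height x).+1) || (height x == (height y).+1).
Proof.
move=> /side_lt lt_x /side_lt lt_y; have := layer_lt x; have := layer_lt y.
rewrite /twin_adj /height /=; move: (cyc_adj _ _ _) (pos x == pos y) => b1 b2.
move: (side x) (side y) (layer x) (layer y) lt_x lt_y => sx sy kx ky.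
by case: sx => [|[|//]] _; case: sy => [|[|//]] _ /=; lia.
Qed.

Lemma twin_adj_height_step x y : x < twin_size -> y < twin_size -> twin_adj x y ->
  height y <= height x + 1 /\ height x <= height y + 1.
Proof.
move=> lt_x lt_y xy; have := twin_adj_height lt_x lt_y xy.
have := side_lt lt_x; have := side_lt lt_y; rewrite /height.
move: (side x) (side y) (layer x) (layer y) => sx sy kx ky lt_sy lt_sx.
by case: sx lt_sx => [|[|//]] _; case: sy lt_sy => [|[|//]] _ /=; lia.
Qed.

Lemma twin_adj_side_change x y : twin_adj x y -> side x != side y ->
  (layer x == r.+1) && (layer y == r.+1).
Proof.
by rewrite /twin_adj /=; move: (cyc_adj _ _ _) (pos x == pos y) => b1 b2; lia.
Qed.

Lemma twin_adj_top x y : twin_adj x y -> side x = side y ->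
  layer x = r.+1 -> layer y = r /\ pos y = pos x.
Proof.
rewrite /twin_adj /=; move: (cyc_adj _ _ _) => b.
by move: (side x) (side y) (layer x) (layer y) (pos x) (pos y); lia.
Qed.

Lemma twin_adj_cyc x y : twin_adj x y -> side x = side y ->
  layer x != r.+1 -> layer y != r.+1 -> cyc_adj m (pos x) (pos y).
Proof.
rewrite /twin_adj /=; move: (cyc_adj _ _ _) => b.
by move: (side x) (side y) (layer x) (layer y) (pos x) (pos y); case: b; lia.
Qed.

Lemma height_cases v : v < twin_size ->
  (side v = 0 /\ height v = layer v) \/ (side v = 1 /\ height v = 2 * r + 3 - layer v).
Proof.
by move=> /side_lt; rewrite /height; case: (side v) => [|[|//]] _; [left|right].
Qed.

Lemma twin_adj_top_neighbour_unique x y z : 0 < m -> twin_adj y x -> twin_adj y z ->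
  side x = side y -> side z = side y -> layer y = r.+1 -> x = z.
Proof.
move=> m_gt0 yx yz sx sz ly.
have [lx px] := twin_adj_top yx (esym sx) ly.
have [lz pz] := twin_adj_top yz (esym sz) ly.
by apply: coords_inj; rewrite ?sx ?sz ?lx ?lz ?px ?pz.
Qed.

End TwinMycielski.

Arguments twin_mycielski : clear implicits.

(** * Odd girth *)

Section OddCycle.
Variables (r m L : nat) (f : nat -> 'I_(twin_size r m)).
Hypotheses (m_gt0 : 0 < m) (L3 : 3 <= L) (odd_L : odd L)
  (f_inj : forall i j, i < L -> j < L -> f i = f j -> i = j)
  (f_adj : forall i, i < L -> twin_mycielski r m (f i) (f (i.+1 %% L))).

Let L_gt0 : 0 < L. Proof. exact: leq_trans L3. Qed.

Let g j := f (j %% L).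

Let g_adj j : twin_adj r m (g j) (g j.+1).
Proof. by have := f_adj (ltn_pmod j L_gt0); rewrite /g modn_succ_mod. Qed.

Let g_addL j : g (j + L) = g j. Proof. by rewrite /g modnDr. Qed.
Let g_mod j : g (j %% L) = g j. Proof. by rewrite /g modn_mod. Qed.
Let g_lt j : g j < twin_size r m. Proof. exact: ltn_ord. Qed.

Let height_lipschitz a b : a <= b ->
  height r m (g b) <= height r m (g a) + (b - a) /\
  height r m (g a) <= height r m (g b) + (b - a).
Proof.
move=> le_ab; rewrite -{1 3}(subnKC le_ab); elim: (b - a) => [|t IH].
  by rewrite !addn0.
have := twin_adj_height_step (g_lt (a + t)) (g_lt (a + t).+1) (g_adj (a + t)).
by rewrite (addnS a t); lia.
Qed.

Let height_gap a b : 2 * height r m (g b) <= 2 * height r m (g a) + L.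
Proof.
rewrite -g_mod -(g_mod a); have := ltn_pmod a L_gt0; have := ltn_pmod b L_gt0.
move: (a %% L) (b %% L) => {}a {}b lt_bL lt_aL.
have [le_ab|lt_ba] := leqP a b.
  have le_b_aL : b <= a + L by lia.
  have := height_lipschitz le_ab; have := height_lipschitz le_b_aL.
  by rewrite g_addL; lia.
have le_a_bL : a <= b + L by lia.
have := height_lipschitz (ltnW lt_ba); have := height_lipschitz le_a_bL.
by rewrite g_addL; lia.
Qed.

Let walk_meets_base : exists a, layer r m (g a) = 0.
Proof.
apply: contrapT => no_base.
have height_parity j : odd (height r m (g j.+1)) = ~~ odd (height r m (g j)).
  have := twin_adj_height (g_lt j) (g_lt j.+1) (g_adj j).
  have : layer r m (g j) != 0 by apply/eqP => base; apply: no_base; exists j.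
  by lia.
have parity j : odd (height r m (g j)) = odd j (+) odd (height r m (g 0)).
  by elim: j => [|j IH] //; rewrite height_parity IH /=; case: (odd j); case: (odd _).
by have := parity L; rewrite -[g L]/(g (0 + L)) g_addL odd_L; case: (odd _).
Qed.

Let crossing_cycle_long :
  (exists j, side r m (g j) != side r m (g j.+1)) -> 2 * r + 5 <= L.
Proof.
case=> j cross.
have /andP[/eqP top_j /eqP top_j1] := twin_adj_side_change (g_adj j) cross.
have [a base_a] := walk_meets_base.
have := height_gap a j; have := height_gap j a.
have := height_gap a j.+1; have := height_gap j.+1 a.
have := height_cases (g_lt j); have := height_cases (g_lt j.+1).
have := height_cases (g_lt a); rewrite top_j top_j1 base_a.
by move: cross odd_L; lia.
Qed.

Let single_side_cycle_long : (forall j, side r m (g j.+1) = side r m (g j)) -> m <= L.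
Proof.
move=> same_side.
have not_top_succ j : layer r m (g j.+1) != r.+1.
  apply/eqP => top.
  have back : twin_adj r m (g j.+1) (g j) by rewrite twin_adjC.
  have := twin_adj_top_neighbour_unique m_gt0 back (g_adj j.+1)
    (esym (same_side j)) (same_side j.+1) top.
  move=> /val_inj /(f_inj (ltn_pmod _ L_gt0) (ltn_pmod _ L_gt0)) /eqP.
  by rewrite -addn2 -{1}[j]addn0 eqn_modDl mod0n modn_small.
have not_top j : layer r m (g j) != r.+1.
  by rewrite -g_addL -(prednK (_ : 0 < j + L)) ?not_top_succ // addn_gt0 L_gt0 orbT.
apply: (@cyc_adj_closed_walk_long _ _ (fun j => pos m (g j))) => // [j|].
  by apply: twin_adj_cyc (g_adj j) (esym (same_side j)) (not_top _) (not_top _).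
by rewrite -[g L]/(g (0 + L)) g_addL.
Qed.

Lemma twin_odd_cycle_long : minn m (2 * r + 5) <= L.
Proof.
have [cross|no_cross] := pselect (exists j, side r m (g j) != side r m (g j.+1)).
  by rewrite geq_min crossing_cycle_long ?orbT.
rewrite geq_min single_side_cycle_long // => j; apply/eqP; rewrite eq_sym.
by apply: contrapT => /negP cross; apply: no_cross; exists j.
Qed.

End OddCycle.

Lemma twin_mycielski_odd_girth r m l : 0 < m -> l < m -> l < 2 * r + 5 ->
  odd_girth_gt (twin_mycielski r m) l.
Proof.
move=> m_gt0 lt_lm lt_lr L odd_L le_Ll [L3 [f [f_inj f_adj]]].
by have := twin_odd_cycle_long m_gt0 L3 odd_L f_inj f_adj; lia.
Qed.

(** * Chromatic number and the edges between the top layers *)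

Section Vertices.
Variables (r m : nat) (m_gt0 : 0 < m).

Lemma twin_vertex_subproof s k i :
  code r m (s %% 2) (k %% r.+2) (i %% m) < twin_size r m.
Proof. by apply: code_lt; rewrite ltn_pmod. Qed.

Definition twin_vertex s k i : 'I_(twin_size r m) :=
  Ordinal (twin_vertex_subproof s k i).

Lemma side_twin_vertex s k i : side r m (twin_vertex s k i) = s %% 2.
Proof. by rewrite /= side_code // ltn_pmod. Qed.

Lemma layer_twin_vertex s k i : layer r m (twin_vertex s k i) = k %% r.+2.
Proof. by rewrite /= layer_code // ltn_pmod. Qed.

Lemma pos_twin_vertex s k i : pos m (twin_vertex s k i) = i %% m.
Proof. by rewrite /= pos_code // ltn_pmod. Qed.

Lemma twin_vertex_period s k i : twin_vertex s k (i + m) = twin_vertex s k i.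
Proof. by apply: val_inj; rewrite /= modnDr. Qed.

Lemma twin_adj_vertex s s' k k' i i' :
  twin_adj r m (twin_vertex s k i) (twin_vertex s' k' i') =
  let s := s %% 2 in let k := k %% r.+2 in let p := i %% m in
  let s' := s' %% 2 in let k' := k' %% r.+2 in let p' := i' %% m in
  [|| [&& s == s', k == 0, k' == 0 & cyc_adj m p p'],
      [&& s == s', k' == k.+1, k' <= r & cyc_adj m p p'],
      [&& s == s', k == k'.+1, k <= r & cyc_adj m p p'],
      [&& s == s', k == r, k' == r.+1 & p == p'],
      [&& s == s', k' == r, k == r.+1 & p == p'] |
      [&& s != s', k == r.+1 & k' == r.+1]].
Proof.
by rewrite /twin_adj !side_twin_vertex !layer_twin_vertex !pos_twin_vertex.
Qed.

End Vertices.

Lemma ord3_other_eq (a b c d : 'I_3) :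
  a != b -> c != a -> c != b -> d != a -> d != b -> c = d.
Proof.
by case: a => [[|[|[|?]]] ?] //; case: b => [[|[|[|?]]] ?] //;
   case: c => [[|[|[|?]]] ?] //; case: d => [[|[|[|?]]] ?] //= *; apply: val_inj.
Qed.

(* The two top layers are completely joined, so in a 3-colouring one of them
   is monochromatic and acts as the apex of the Mycielskian on its side. *)
Lemma twin_mycielski_not_3colorable r m :
  odd m -> ~ colorable (twin_mycielski r m) 3.
Proof.
move=> odd_m [f f_proper].
have m_gt0 : 0 < m by rewrite lt0n; apply: contraTneq odd_m => ->.
pose F s k i := f (twin_vertex r m_gt0 s k i).
have F_per s k i : F s k (i + m) = F s k i by rewrite /F twin_vertex_period.
have small k : k <= r.+1 -> k %% r.+2 = k by move=> le_kr; rewrite modn_small.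
have base s i : s < 2 -> F s 0 i != F s 0 i.+1.
  move=> lt_s2; apply: f_proper.
  by rewrite /twin_mycielski twin_adj_vertex /= mod0n cyc_adj_succ eqxx.
have layers s k i : s < 2 -> k < r ->
    F s k i != F s k.+1 i.+1 /\ F s k.+1 i != F s k i.+1.
  move=> lt_s2 lt_kr; split; apply: f_proper;
    by rewrite /twin_mycielski twin_adj_vertex /= !small ?cyc_adj_succ; lia.
have to_top s i : s < 2 -> F s r i != F s r.+1 i.
  move=> lt_s2; apply: f_proper.
  by rewrite /twin_mycielski twin_adj_vertex /= !small //; lia.
have across i j : F 0 r.+1 i != F 1 r.+1 j.
  by apply: f_proper; rewrite /twin_mycielski twin_adj_vertex /= !small //; lia.
have apex_contra s : s < 2 -> (forall i, F s r.+1 i = F s r.+1 0) -> False.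
  move=> lt_s2 mono.
  apply: (@gen_mycielski_not_3colorable m r (F s) (F s r.+1 0) odd_m (F_per s))
    => [i|k i lt_kr|i]; [exact: base | exact: layers |].
  by rewrite -(mono i); apply: to_top.
have [mono0|/existsNP [i0 ne_i0]] := pselect (forall i, F 0 r.+1 i = F 0 r.+1 0).
  exact: (apex_contra 0).
apply: (apex_contra 1) => // j; apply: (@ord3_other_eq (F 0 r.+1 i0) (F 0 r.+1 0));
  by [apply/eqP | rewrite eq_sym across].
Qed.

Definition cyc_col (q : nat) : nat := if q == 0 then 0 else if odd q then 1 else 2.

Lemma cyc_col_succ m q :
  odd m -> 3 <= m -> q < m -> cyc_col q != cyc_col (q.+1 %% m).
Proof.
move=> odd_m m3 lt_qm; have [eqSm|ltSm] : q.+1 = m \/ q.+1 < m by lia.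
  by rewrite eqSm modnn /cyc_col /=; repeat case: ifP => ? /=; lia.
by rewrite modn_small // /cyc_col /=; repeat case: ifP => ? /=; lia.
Qed.

Lemma cyc_col_adj m q q' : odd m -> 3 <= m -> q < m -> q' < m ->
  cyc_adj m q q' -> cyc_col q != cyc_col q'.
Proof.
move=> odd_m m3 lt_qm lt_q'm /orP[] /eqP ->; first exact: cyc_col_succ.
by rewrite eq_sym; apply: cyc_col_succ.
Qed.

Lemma shift_mod_eq0 m p i :
  p < m -> i < m -> ((p + (m - i)) %% m == 0) = (p == i).
Proof.
move=> lt_pm lt_im; have [le_ip|lt_pi] := leqP i p.
  by rewrite (_ : p + (m - i) = (p - i) + m) ?modnDr ?modn_small; lia.
by rewrite modn_small; lia.
Qed.

Section CrossEdgeColouring.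
Variables (r m : nat).
Hypotheses (odd_m : odd m) (m3 : 3 <= m).

Let m_gt0 : 0 < m. Proof. exact: leq_trans m3. Qed.

(* On one side: the layers 0..r are coloured by the position relative to i
   along the odd cycle, colour 0 exactly at i; the top layer gets colour 1
   at position i and 0 elsewhere. *)
Definition half_col i x :=
  if layer r m x <= r then cyc_col ((pos m x + (m - i)) %% m)
  else if pos m x == i then 1 else 0.

(* Side 1 uses the mirror image [2 - half_col], so the two top layers share
   only colour 1, at the positions i and j. *)
Definition cross_col i j x :=
  if side r m x == 0 then half_col i x else 2 - half_col j x.

Lemma half_col_le2 i x : half_col i x <= 2.
Proof. by rewrite /half_col /cyc_col; repeat case: ifP. Qed.

Lemma half_col_low i x y : layer r m x <= r -> layer r m y <= r ->
  cyc_adj m (pos m x) (pos m y) -> half_col i x != half_col i y.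
Proof.
move=> low_x low_y adj_xy; rewrite /half_col low_x low_y.
by apply: (@cyc_col_adj m); rewrite ?ltn_pmod ?cyc_adj_shift.
Qed.

Lemma half_col_top i x y : i < m -> layer r m x = r -> layer r m y = r.+1 ->
  pos m x = pos m y -> half_col i x != half_col i y.
Proof.
move=> lt_im lx ly pxy; rewrite /half_col lx ly pxy leqnn ltnn.
rewrite -(shift_mod_eq0 (pos_lt y m_gt0) lt_im) /cyc_col.
by case: (_ %% m) => [|q] //=; case: ifP.
Qed.

Lemma half_col_proper i x y : i < m -> twin_adj r m x y -> side r m x = side r m y ->
  half_col i x != half_col i y.
Proof.
move=> lt_im xy same_side; move: xy; rewrite /twin_adj /= same_side eqxx /=.
case/orP=> [/and3P[/eqP lx /eqP ly adj_xy]|].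
  by apply: half_col_low; rewrite ?lx ?ly.
case/orP=> [/and3P[/eqP lxy le_r adj_xy]|].
  by apply: half_col_low; rewrite ?lxy //; lia.
case/orP=> [/and3P[/eqP lxy le_r adj_xy]|].
  by apply: half_col_low; rewrite ?lxy //; lia.
case/orP=> [/and3P[/eqP lx /eqP ly /eqP pxy]|]; first exact: half_col_top.
by case/orP=> [/and3P[/eqP ly /eqP lx /eqP pxy]|]; rewrite // eq_sym half_col_top.
Qed.

Lemma cross_col_lt3 i j x : cross_col i j x < 3.
Proof. by rewrite /cross_col; case: ifP; rewrite ltnS ?half_col_le2 ?leq_subr. Qed.

Lemma cross_col_proper (u v x y : 'I_(twin_size r m)) :
  side r m u = 0 -> layer r m u = r.+1 -> side r m v = 1 -> layer r m v = r.+1 ->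
  remove_edge (twin_mycielski r m) u v x y ->
  cross_col (pos m u) (pos m v) x != cross_col (pos m u) (pos m v) y.
Proof.
move=> su lu sv lv /andP[xy not_uv]; rewrite /cross_col.
have [lt_u lt_v] := (pos_lt u m_gt0, pos_lt v m_gt0).
have [same_side|cross] := eqVneq (side r m x) (side r m y).
  rewrite same_side; case: ifP => _; first exact: half_col_proper.
  have := half_col_le2 (pos m v) x; have := half_col_le2 (pos m v) y.
  by have := half_col_proper lt_v xy same_side; lia.
have /andP[/eqP lx /eqP ly] := twin_adj_side_change xy cross.
have vertex_eq (w w' : 'I_(twin_size r m)) : side r m w = side r m w' ->
    layer r m w = layer r m w' -> pos m w = pos m w' -> w = w'.
  by move=> sw lw pw; apply: val_inj; apply: coords_inj m_gt0 sw lw pw.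
have sides : (side r m x = 0 /\ side r m y = 1) \/ (side r m x = 1 /\ side r m y = 0).
  by have := side_lt (ltn_ord x); have := side_lt (ltn_ord y); move: cross; lia.
case: sides => [[sx sy]|[sx sy]]; rewrite /half_col sx sy lx ly ltnn /=.
  have [px|] := eqVneq (pos m x) (pos m u); have [py|] := eqVneq (pos m y) (pos m v) => //.
  move: not_uv; rewrite (vertex_eq x u) ?sx ?su ?lx ?lu //.
  by rewrite (vertex_eq y v) ?sy ?sv ?ly ?lv // !eqxx.
have [px|] := eqVneq (pos m x) (pos m v); have [py|] := eqVneq (pos m y) (pos m u) => //.
move: not_uv; rewrite (vertex_eq y u) ?sy ?su ?ly ?lu //.
by rewrite (vertex_eq x v) ?sx ?sv ?lx ?lv // !eqxx orbT.
Qed.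

Lemma remove_cross_edge_3colorable (u v : 'I_(twin_size r m)) :
  side r m u = 0 -> layer r m u = r.+1 -> side r m v = 1 -> layer r m v = r.+1 ->
  colorable (remove_edge (twin_mycielski r m) u v) 3.
Proof.
move=> su lu sv lv; exists (fun x => inord (cross_col (pos m u) (pos m v) x)) => x y xy.
apply: contra (cross_col_proper su lu sv lv xy) => /eqP /(congr1 val).
by rewrite /= !inordK ?cross_col_lt3 // => ->.
Qed.

Let top s (p : 'I_m) := twin_vertex r m_gt0 s r.+1 p.

Lemma top_inj s : injective (top s).
Proof.
move=> p q /(congr1 (pos m \o val)); rewrite /= !pos_code ?ltn_pmod //.
by rewrite !modn_small // => /val_inj.
Qed.

Lemma uncolorable_subgraph_cross_edges (e : rel 'I_(twin_size r m)) :
  symmetric e -> subrel e (twin_mycielski r m) -> ~ colorable e 3 ->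
  forall p q, e (top 0 p) (top 1 q).
Proof.
move=> sym sub uncol p q; apply: contrapT => not_pq; apply: uncol.
have := @remove_cross_edge_3colorable (top 0 p) (top 1 q).
rewrite !side_twin_vertex !layer_twin_vertex !modn_small // => /(_ erefl erefl erefl erefl).
apply: colorable_subrel.
move=> x y exy; rewrite /remove_edge sub //=.
apply/negP => /orP[] /andP[/eqP ex /eqP ey]; apply: not_pq.
  by move: exy; rewrite ex ey.
by move: exy; rewrite ex ey sym.
Qed.

Lemma uncolorable_subgraph_num_edges (e : rel 'I_(twin_size r m)) :
  simple_graph e -> subrel e (twin_mycielski r m) -> ~ colorable e 3 ->
  m * m < num_edges e.
Proof.
move=> [irr sym] sub uncol.
pose cross (pq : 'I_m * 'I_m) := (top 0 pq.1, top 1 pq.2).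
have cross_inj : injective cross.
  move=> [p q] [p' q'] eq_cross.
  have /top_inj -> : top 0 p = top 0 p' by exact: (congr1 fst eq_cross).
  by have /top_inj -> : top 1 q = top 1 q' by exact: (congr1 snd eq_cross).
set E := [set pq : 'I_(twin_size r m) * 'I_(twin_size r m) |
          (pq.1 < pq.2)%N && e pq.1 pq.2].
have cross_sub : cross @: [set: 'I_m * 'I_m] \subset E.
  apply/fintype.subsetP => _ /imsetP [[p q] _ ->].
  rewrite inE uncolorable_subgraph_cross_edges // andbT /= /code !modn_small //.
  have : m <= r.+2 * m by rewrite leq_pmull.
  by rewrite mul0n add0n mul1n mulnDl; move: (r.+2 * m) (r.+1 * m) (ltn_ord p); lia.
have card_cross : #|cross @: [set: 'I_m * 'I_m]| = m * m.
  by rewrite card_imset // cardsT card_prod card_ord.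
rewrite -card_cross /num_edges -/E; apply: proper_card.
rewrite properEcard cross_sub /= ltn_neqAle subset_leq_card // andbT.
apply/negP => /eqP eq_card; apply/uncol/(colorable_widen (_ : 2 <= 3)) => //.
have E_cross : cross @: [set: 'I_m * 'I_m] = E.
  by apply/eqP; rewrite eqEcard cross_sub eq_card leqnn.
have edge_sides (a b : 'I_(twin_size r m)) :
    (a < b)%N -> e a b -> side r m a = 0 /\ side r m b = 1.
  move=> lt_ab eab; have : (a, b) \in E by rewrite inE lt_ab eab.
  by rewrite -E_cross => /imsetP [pq _ [-> ->]]; rewrite !side_twin_vertex.
exists (fun x => inord (side r m x)) => x y exy.
have [lt_xy|lt_yx|eq_xy] := ltngtP x y; last by move: exy; rewrite (val_inj eq_xy) irr.
  by have [-> ->] := edge_sides _ _ lt_xy exy; rewrite -val_eqE /= !inordK.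
rewrite sym in exy; have [-> ->] := edge_sides _ _ lt_yx exy.
by rewrite -val_eqE /= !inordK.
Qed.

End CrossEdgeColouring.

(** * The density bound *)

Lemma critical4_family l N : 3 <= l -> exists n (e : rel 'I_n),
  [/\ N <= n, simple_graph e, critical e 4, odd_girth_gt e l &
      n * n < l.+1 ^ 2 * num_edges e].
Proof.
move=> l3; set r := (l - 3)./2; set m := (N + l).*2.+1.
have odd_m : odd m by rewrite /m /= odd_double.
have m3 : 3 <= m by rewrite /m; lia.
have r_bound : 2 * r + 3 <= l <= 2 * r + 4.
  by have := odd_double_half (l - 3); rewrite /r; lia.
have [e [simple_e sub uncol minimal]] :=
  edge_minimal_subgraph (@twin_mycielski_simple r m (ltnW m3))
    (@twin_mycielski_not_3colorable r m odd_m).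
have size_le : twin_size r m <= l.+1 * m by rewrite /twin_size mulnAC leq_mul //; lia.
exists (twin_size r m), e; split.
- by rewrite /twin_size; nia.
- exact: simple_e.
- exact: critical_of_edge_minimal.
- by apply: odd_girth_gt_subrel sub _; apply: twin_mycielski_odd_girth; rewrite /m; lia.
have edges := uncolorable_subgraph_num_edges odd_m m3 simple_e sub uncol.
apply: leq_ltn_trans (leq_mul size_le size_le) _.
by rewrite mulnACA -[l.+1 * l.+1]/(l.+1 ^ 2) ltn_pmul2l ?expn_gt0.
Qed.

Local Open Scope ring_scope.

Lemma dense_family_lt1 (R : realType) l k (d : R) : dense_family l k d -> d < 1.
Proof.
move=> dense_d; have [n [e [n_gt0 _ _ _ edges]]] := dense_d 1%N.
have edges_le : (num_edges e)%:R <= n%:R ^+ 2 :> R.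
  by rewrite -natrX ler_nat num_edges_le_square.
have n2_gt0 : 0 < n%:R ^+ 2 :> R by rewrite exprn_gt0 // ltr0n.
by have := lt_le_trans edges edges_le; nra.
Qed.

Lemma density_constant_ge (R : realType) l k (c : R) :
  dense_family l k c -> c <= density_constant R l k.
Proof.
move=> dense_c; rewrite /density_constant; apply: sup_upper_bound => //.
split; first by exists c.
by exists 1 => d /dense_family_lt1 /ltW.
Qed.

Theorem theorem3 (R : realType) (l : nat) (hl : (3 <= l)%N) :
  (forall N : nat, exists (n : nat) (e : rel 'I_n),
     [/\ (N <= n)%N, simple_graph e, critical e 4 & odd_girth_gt e l]) /\
  (exists c : R, 0 < c /\ dense_family l 4 c) /\
  1 / (l.+1%:R ^+ 2) <= density_constant R l 4.
Proof.
set c : R := 1 / (l.+1%:R ^+ 2).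
have l1_gt0 : 0 < (l.+1%:R : R) ^+ 2 by rewrite exprn_gt0 // ltr0n.
have dense : dense_family l 4 c.
  move=> N; have [n [e [? ? ? ? edges]]] := critical4_family N hl.
  exists n, e; split=> //; rewrite /c mul1r mulrC ltr_pdivrMr //.
  by rewrite -!natrX -natrM ltr_nat mulnC.
split=> [N|]; first by have [n [e [? ? ? ? _]]] := critical4_family N hl; exists n, e.
split; last exact: density_constant_ge.
by exists c; split; rewrite ?divr_gt0.
Qed.
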